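(* Let $G(\circ)$, $G(\ast)$ be groups on a set $G$ of size $n$ and $a\in G$ with $\mathrm{dist}_a=2$. Then $\{|a|_\circ,|a|_\ast\}=\{n,n/2\}$.
   Context: $|a|_\circ$, $|a|_\ast$ are the orders of $a$ in $G(\circ)$, $G(\ast)$. $\mathrm{dist}_a=|\{b\in G: a\circ b\ne a\ast b\}|$. *)

From mathcomp Require Import all_boot all_fingroup.
Set Implicit Arguments. Unset Strict Implicit. Unset Printing Implicit Defensive.
Local Open Scope group_scope.

(* Two group structures on one finite set G are modelled as two finite group
   types gT1 (the group G(o)) and gT2, the underlying set of G being identified
   with the carrier of gT1 and transported to gT2 via a bijection f.  Thus the
   second operation on G is  x * y := f^-1 (f x * f y).
   dist f a = #|{b in G : a o b <> a * b}|. *)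
Definition dist (gT1 gT2 : finGroupType) (f : gT1 -> gT2) (a : gT1) : nat :=
  #|[set b : gT1 | f (a * b) != f a * f b]|.

From mathcomp Require Import all_boot all_fingroup zify.
Set Implicit Arguments. Unset Strict Implicit. Unset Printing Implicit Defensive.
Local Open Scope group_scope.

(* Left multiplication by a in G(o) and by a in G( * ) are two permutations of
   G whose cycles all have lengths |a|_o and |a|_*, respectively.  When
   dist_a = 2 they differ by a transposition (b1 b2).  Composing with a
   transposition either splits the cycle through b1 and b2 into two cycles or
   merges the two cycles through them into one, and leaves all other cycles
   untouched.  Since cycle lengths are uniform on both sides, an untouched
   cycle can exist in neither case: in the splitting case G is a single cycle
   of length n split into two of length n/2, and the merging case is the
   splitting case read backwards. *)

Section PermOrbits.

Variable T : finType.
Implicit Types (s u : {perm T}) (x y z : T).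

Lemma partition_porbits s : partition (porbits s) [set: T].
Proof.
have actsT : [acts <[s]>, on [set: T] | 'P] by apply/actsP => t _ x; rewrite !inE.
have := orbit_partition actsT; rewrite -porbitE.
by congr (partition _ _); apply/setP => A; apply/imsetP/imsetP => -[x _ ->]; exists x.
Qed.

Lemma card_porbits_uniform s k :
  (forall x, #|porbit s x| = k) -> #|T| = (#|porbits s| * k)%N.
Proof.
move=> sk; rewrite -cardsT (card_uniform_partition (n := k) _ (partition_porbits s)) //.
by move=> _ /imsetP[x _ ->].
Qed.

Lemma porbit_mul_tperm_out s x y z :
  x \notin porbit s z -> y \notin porbit s z ->
  porbit (tperm x y * s) z = porbit s z.
Proof.
move=> xz yz; have expE n : ((tperm x y * s) ^+ n) z = (s ^+ n) z.
  elim: n => // n IHn; rewrite !expgSr !permM IHn tpermD //.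
    by apply: contraNneq xz => ->; apply: mem_porbit.
  by apply: contraNneq yz => ->; apply: mem_porbit.
apply/porbit_setP => t.
by apply/porbitP/porbitP => -[n ->]; exists n; rewrite expE.
Qed.

Lemma perm_moved_pair s u x y :
  [set z | u z != s z] = [set x; y] -> u x = s y.
Proof.
move=> D; have moved z : (u z != s z) = (z \in [set x; y]) by rewrite -D inE.
set w := s^-1 (u x); suff <- : w = y by rewrite permKV.
have wx : w != x.
  apply: contraTneq (set21 x y) => wx.
  by rewrite -moved negbK; apply/eqP; rewrite -{2}wx /w permKV.
have [//|wy] := eqVneq w y; case/eqP: (wx); apply: (@perm_inj _ u).
have /negbNE/eqP -> : ~~ (u w != s w) by rewrite moved !inE negb_or wx.
by rewrite /w permKV.
Qed.

Lemma perm_moved_pair_tperm s u x y :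
  [set z | u z != s z] = [set x; y] -> u = tperm x y * s.
Proof.
move=> D; apply/permP => z; rewrite permM.
case: tpermP => [-> | -> | zx zy]; first exact: perm_moved_pair.
  by apply: perm_moved_pair; rewrite setUC.
have : z \notin [set x; y] by rewrite !inE negb_or; apply/andP; split; apply/eqP.
by rewrite -D inE negbK => /eqP.
Qed.

Lemma card_uniform_porbits_split s x y k k' :
  x != y -> x \in porbit s y ->
  (forall z, #|porbit s z| = k) -> (forall z, #|porbit (tperm x y * s) z| = k') ->
  k = #|T| /\ (2 * k')%N = #|T|.
Proof.
move=> xy xsy sk uk'.
have k_gt0 : 0 < k by rewrite -(sk y) lt0n card_porbit_neq0.
have count : #|porbits (tperm x y * s)| = #|porbits s|.+1.
  by have := porbits_mul_tperm s x y; rewrite /= xsy xy addn0 addn1.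
have nT := card_porbits_uniform sk; have nT' := card_porbits_uniform uk'.
have sy_full : porbit s y = [set: T].
  apply/setP => z; rewrite inE; apply: contraT => zsy.
  have ysz : y \notin porbit s z by rewrite porbit_sym.
  have xsz : x \notin porbit s z.
    by move: xsy; rewrite -!eq_porbit_mem => /eqP ->; rewrite eq_porbit_mem.
  have kk' : k' = k by rewrite -(sk z) -(uk' z) porbit_mul_tperm_out.
  by exfalso; rewrite kk' count in nT'; nia.
have Tk : k = #|T| by rewrite -(sk y) sy_full cardsT.
split=> //; nia.
Qed.

Lemma card_uniform_porbits_mul_tperm s x y k k' :
  x != y ->
  (forall z, #|porbit s z| = k) -> (forall z, #|porbit (tperm x y * s) z| = k') ->
  (k = #|T| /\ (2 * k')%N = #|T|) \/ ((2 * k)%N = #|T| /\ k' = #|T|).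
Proof.
move=> xy sk uk'; have [xsy|xsy] := boolP (x \in porbit s y).
  by left; exact: (card_uniform_porbits_split xy xsy sk uk').
set u := tperm x y * s; have su : s = tperm x y * u by rewrite /u tpermKg.
have xuy : x \in porbit u y.
  apply: contraT => xuy.
  have countu : (#|porbits u| + 2 = #|porbits s| + 1)%N.
    by have := porbits_mul_tperm s x y; rewrite /= xsy xy.
  have counts : (#|porbits s| + 2 = #|porbits u| + 1)%N.
    by have := porbits_mul_tperm u x y; rewrite /= -su xuy xy.
  lia.
by rewrite su in sk; right; case: (card_uniform_porbits_split xy xuy uk' sk).
Qed.

End PermOrbits.

Section TransportedTranslation.

Variables (T : finType) (gT : finGroupType) (h : T -> gT) (h' : gT -> T).
Hypotheses (hK : cancel h h') (h'K : cancel h' h).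
Variable c : gT.

Fact lmul_via_inj : injective (fun x => h' (c * h x)).
Proof. by move=> x1 x2 /(can_inj h'K)/mulgI/(can_inj hK). Qed.

Definition lmul_via : {perm T} := perm lmul_via_inj.

Lemma lmul_viaX i x : (lmul_via ^+ i) x = h' (c ^+ i * h x).
Proof.
elim: i x => [|i IHi] x; first by rewrite !expg0 perm1 mul1g hK.
by rewrite expgSr permM permE IHi h'K expgS mulgA.
Qed.

Lemma porbit_lmul_via x : porbit lmul_via x = h' @: (<[c]> :* h x).
Proof.
apply/setP => y; apply/porbitP/imsetP => [[i ->] | [_ /rcosetP[_ /cycleP[i ->] ->] ->]].
  by rewrite lmul_viaX; exists (c ^+ i * h x); rewrite // mem_rcoset mulgK mem_cycle.
by exists i; rewrite lmul_viaX.
Qed.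

Lemma card_porbit_lmul_via x : #|porbit lmul_via x| = #[c].
Proof. by rewrite porbit_lmul_via (card_imset _ (can_inj h'K)) card_rcoset. Qed.

End TransportedTranslation.

Theorem proposition4p14 (gT1 gT2 : finGroupType) (f : gT1 -> gT2)
  (f_bij : bijective f) (a : gT1) :
  dist f a = 2 ->
  (#[a] = #|gT1| /\ 2 * #[f a] = #|gT1|)%N \/
  (2 * #[a] = #|gT1| /\ #[f a] = #|gT1|)%N.
Proof.
case: f_bij => g fK gK; rewrite /dist => /eqP/cards2P[b1 [b2 [b12 moved]]].
have idK : cancel (@id gT1) id by [].
pose s := lmul_via idK idK a; pose u := lmul_via fK gK (f a).
have u_moved : [set b | u b != s b] = [set b1; b2].
  rewrite -moved; apply/setP => b; rewrite !inE !permE; congr negb.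
  by apply/eqP/eqP => <-; [rewrite gK | rewrite fK].
have := card_uniform_porbits_mul_tperm b12 (card_porbit_lmul_via idK idK a).
by rewrite -(perm_moved_pair_tperm u_moved); apply; apply: card_porbit_lmul_via.
Qed.
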